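(* Let $G$ be a belt with partition $Q_1,\dots,Q_5,R_2,R_3$. Then: (a) for each $j\in\{2,3\}$, any two non-adjacent vertices of $R_j$ have no common neighbor in $Q_{5-j}$; (b) there are no edges between $R_2$ and $R_3$; (c) for each $j\in\{2,3\}$, every vertex of $Q_j$ that has a neighbor in $R_{5-j}$ is complete to $Q_{5-j}$; (d) $G[R_2]$ and $G[R_3]$ are $(P_4,2P_3)$-free.
   Context: A belt is a $(P_6,C_4,C_6)$-free graph whose vertex set is partitioned into seven sets $Q_1,\dots,Q_5,R_2,R_3$ such that: $Q_1,\dots,Q_5$ are non-empty cliques; $Q_1$ is complete to $Q_2\cup R_2\cup Q_5$ and $Q_4$ is complete to $Q_3\cup R_3\cup Q_5$; $Q_1$ is anticomplete to $Q_3\cup R_3\cup Q_4$, $Q_4$ is anticomplete to $Q_2\cup R_2\cup Q_1$, $Q_5$ is anticomplete to $Q_2\cup R_2\cup Q_3\cup R_3$; for each $j\in\{2,3\}$, $Q_j$ is complete to $R_j$, every vertex of $Q_j\cup R_j$ has a neighbor in $Q_{5-j}\cup R_{5-j}$, and no vertex of $R_j$ is adjacent to all other vertices of $R_j$. Complete/anticomplete: all edges / no edges between the sets. $2P_3$ is the disjoint union of two copies of $P_3$. *)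

From mathcomp Require Import all_boot.
Set Implicit Arguments. Unset Strict Implicit. Unset Printing Implicit Defensive.

Definition path_pat (n : nat) : rel 'I_n :=
  fun i j => (i.+1 == j :> nat) || (j.+1 == i :> nat).
Arguments path_pat : clear implicits.
Definition cycle_pat (n : nat) : rel 'I_n :=
  fun i j => path_pat n i j ||
     ((i == 0 :> nat) && (j == n.-1 :> nat)) ||
     ((j == 0 :> nat) && (i == n.-1 :> nat)).
Arguments cycle_pat : clear implicits.
(* 2P_3 on {0,..,5}: paths 0-1-2 and 3-4-5 *)
Definition twoP3_pat : rel 'I_6 :=
  fun i j => path_pat 6 i j && ~~ ((i == 2 :> nat) && (j == 3 :> nat))
                          && ~~ ((i == 3 :> nat) && (j == 2 :> nat)).


Section Graphs.
Variable T : finType.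
Variable e : rel T.

Definition simple_graph := symmetric e /\ irreflexive e.

Definition contains_induced_in (A : {set T}) (k : nat) (h : rel 'I_k) :=
  exists f : 'I_k -> T, injective f /\ (forall i, f i \in A) /\
    (forall i j, e (f i) (f j) = h i j).

Definition contains_induced k (h : rel 'I_k) := contains_induced_in setT h.

Definition is_clique (A : {set T}) :=
  forall x y, x \in A -> y \in A -> x != y -> e x y.
Definition complete (A B : {set T}) :=
  forall x y, x \in A -> y \in B -> e x y.
Definition anticomplete (A B : {set T}) :=
  forall x y, x \in A -> y \in B -> ~~ e x y.

Definition dominated_into (A B : {set T}) :=
  forall x, x \in A -> exists2 y, y \in B & e x y.

Definition no_universal (R : {set T}) :=
  forall x, x \in R -> exists2 y, y \in R & (y != x) && ~~ e x y.


Definition belt (Q1 Q2 Q3 Q4 Q5 R2 R3 : {set T}) :=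
  simple_graph /\
  ~ contains_induced (path_pat 6) /\
  ~ contains_induced (cycle_pat 4) /\
  ~ contains_induced (cycle_pat 6) /\
  (* partition of V(G) into seven sets: each vertex lies in exactly one *)
  (forall x : T, count (fun A : {set T} => x \in A)
                       [:: Q1; Q2; Q3; Q4; Q5; R2; R3] = 1) /\
  (Q1 != set0 /\ Q2 != set0 /\ Q3 != set0 /\ Q4 != set0 /\ Q5 != set0) /\
  (is_clique Q1 /\ is_clique Q2 /\ is_clique Q3 /\ is_clique Q4 /\ is_clique Q5) /\
  complete Q1 (Q2 :|: R2 :|: Q5) /\ complete Q4 (Q3 :|: R3 :|: Q5) /\
  anticomplete Q1 (Q3 :|: R3 :|: Q4) /\ anticomplete Q4 (Q2 :|: R2 :|: Q1) /\
  anticomplete Q5 (Q2 :|: R2 :|: Q3 :|: R3) /\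
  complete Q2 R2 /\ complete Q3 R3 /\
  dominated_into (Q2 :|: R2) (Q3 :|: R3) /\ dominated_into (Q3 :|: R3) (Q2 :|: R2) /\
  no_universal R2 /\ no_universal R3.
End Graphs.

(* Every property follows by exhibiting a forbidden induced subgraph.  A vertex
   of Q1 sees all of R2 and no vertex of Q3 or R3, so two non-adjacent vertices
   of R2 with a common neighbour in Q3 or R3 span an induced C4 with it; this is
   (a).  An edge between R2 and R3, together with non-neighbours in R2 and R3
   (no vertex of R_j is universal in R_j) and vertices of Q1 and Q4, yields an
   induced P6 or C6, proving (b); (c) is similar.  By (b) every vertex of R2 has
   a neighbour in the clique Q3, and attaching such neighbours (and Q4, Q5) to
   an induced P4 or 2P3 in R2 produces an induced P6.  All the statements are
   invariant under the mirror symmetry Q1 <-> Q4, Q2 <-> Q3, R2 <-> R3. *)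

From mathcomp Require Import all_boot.
Set Implicit Arguments. Unset Strict Implicit. Unset Printing Implicit Defensive.

Section InducedCopies.
Variables (T : finType) (e : rel T).

Definition twins k (h : rel 'I_k) (i j : 'I_k) := forall l, h i l = h j l.

Lemma contains_induced_nth k (h : rel 'I_k) (s : seq T) x0 :
  (forall i j : 'I_k, e (nth x0 s i) (nth x0 s j) = h i j) ->
  (forall i j : 'I_k, twins h i j -> i != j -> nth x0 s i != nth x0 s j) ->
  contains_induced e h.
Proof.
move=> s_h s_twins; exists (fun i => nth x0 s i); split; last by [].
move=> i j sij; case: (eqVneq i j) => // ij.
have tw : twins h i j by move=> l; rewrite -!s_h sij.
by move: (s_twins i j tw ij); rewrite sij eqxx.
Qed.

End InducedCopies.

(* Twins are decided by evaluation on a nat-level description [p] of the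
   pattern: [iota] computes, whereas enumerating ['I_k] does not. *)
Lemma twins_iota k (p : nat -> nat -> bool) (i j : 'I_k) :
  twins (fun a b : 'I_k => p a b) i j -> all (fun l => p i l == p j l) (iota 0 k).
Proof.
by move=> ij; apply/allP => l; rewrite mem_iota => /andP[_ lk]; rewrite (ij (Ordinal lk)).
Qed.

Lemma path6_twins_eq (i j : 'I_6) : twins (path_pat 6) i j -> i = j.
Proof.
move/(twins_iota (p := fun a b => (a.+1 == b) || (b.+1 == a))).
by case: i j => [[|[|[|[|[|[|i]]]]]] ?] [[|[|[|[|[|[|j]]]]]] ?] //= _; apply: val_inj.
Qed.

Lemma cycle6_twins_eq (i j : 'I_6) : twins (cycle_pat 6) i j -> i = j.
Proof.
move/(twins_iota (p := fun a b => (a.+1 == b) || (b.+1 == a) ||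
                                      (a == 0) && (b == 5) || (b == 0) && (a == 5))).
by case: i j => [[|[|[|[|[|[|i]]]]]] ?] [[|[|[|[|[|[|j]]]]]] ?] //= _; apply: val_inj.
Qed.

Ltac by_adjacency e_sym e_irr :=
  solve [ exact: e_irr | assumption | rewrite e_sym; assumption
        | apply/negbTE; first [assumption | rewrite e_sym; assumption] ].

Section ForbiddenSubgraphs.
Variables (T : finType) (e : rel T).
Hypotheses (e_sym : symmetric e) (e_irr : irreflexive e).
Hypotheses (P6_free : ~ contains_induced e (path_pat 6))
           (C4_free : ~ contains_induced e (cycle_pat 4))
           (C6_free : ~ contains_induced e (cycle_pat 6)).

Lemma no_induced_P6 x0 x1 x2 x3 x4 x5 :
  e x0 x1 -> e x1 x2 -> e x2 x3 -> e x3 x4 -> e x4 x5 ->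
  ~~ e x0 x2 -> ~~ e x0 x3 -> ~~ e x0 x4 -> ~~ e x0 x5 ->
  ~~ e x1 x3 -> ~~ e x1 x4 -> ~~ e x1 x5 ->
  ~~ e x2 x4 -> ~~ e x2 x5 -> ~~ e x3 x5 -> False.
Proof.
move=> *; apply: P6_free.
apply: (@contains_induced_nth _ _ _ _ [:: x0; x1; x2; x3; x4; x5] x0).
- move=> [[|[|[|[|[|[|i]]]]]] ?] [[|[|[|[|[|[|j]]]]]] ?] //;
    rewrite /path_pat /=; by_adjacency e_sym e_irr.
- by move=> i j /path6_twins_eq ->; rewrite eqxx.
Qed.

Lemma no_induced_C6 x0 x1 x2 x3 x4 x5 :
  e x0 x1 -> e x1 x2 -> e x2 x3 -> e x3 x4 -> e x4 x5 -> e x0 x5 ->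
  ~~ e x0 x2 -> ~~ e x0 x3 -> ~~ e x0 x4 ->
  ~~ e x1 x3 -> ~~ e x1 x4 -> ~~ e x1 x5 ->
  ~~ e x2 x4 -> ~~ e x2 x5 -> ~~ e x3 x5 -> False.
Proof.
move=> *; apply: C6_free.
apply: (@contains_induced_nth _ _ _ _ [:: x0; x1; x2; x3; x4; x5] x0).
- move=> [[|[|[|[|[|[|i]]]]]] ?] [[|[|[|[|[|[|j]]]]]] ?] //;
    rewrite /cycle_pat /path_pat /=; by_adjacency e_sym e_irr.
- by move=> i j /cycle6_twins_eq ->; rewrite eqxx.
Qed.

Lemma no_induced_C4 x0 x1 x2 x3 :
  e x0 x1 -> e x1 x2 -> e x2 x3 -> e x0 x3 ->
  ~~ e x0 x2 -> ~~ e x1 x3 -> x0 != x2 -> x1 != x3 -> False.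
Proof.
move=> *; apply: C4_free.
apply: (@contains_induced_nth _ _ _ _ [:: x0; x1; x2; x3] x0).
- move=> [[|[|[|[|i]]]] ?] [[|[|[|[|j]]]] ?] //;
    rewrite /cycle_pat /path_pat /=; by_adjacency e_sym e_irr.
- move=> i j /(twins_iota (p := fun a b => (a.+1 == b) || (b.+1 == a) ||
                                      (a == 0) && (b == 3) || (b == 0) && (a == 3))).
  by case: i j => [[|[|[|[|i]]]] ?] [[|[|[|[|j]]]] ?] //= _ _; rewrite eq_sym.
Qed.

End ForbiddenSubgraphs.

(* The belt axioms in the form used below.  A belt satisfies them both as given
   and after the mirror relabelling (Q4, Q3, Q2, Q1, Q5, R3, R2). *)
Record half_belt (T : finType) (e : rel T) (Q1 Q2 Q3 Q4 Q5 R2 R3 : {set T}) : Prop :=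
  HalfBelt {
  belt_sym : symmetric e;
  belt_irr : irreflexive e;
  belt_P6_free : ~ contains_induced e (path_pat 6);
  belt_C4_free : ~ contains_induced e (cycle_pat 4);
  belt_C6_free : ~ contains_induced e (cycle_pat 6);
  Q1_nonempty : Q1 != set0;
  Q4_nonempty : Q4 != set0;
  Q5_nonempty : Q5 != set0;
  complete_Q1_Q2 : complete e Q1 Q2;
  complete_Q1_R2 : complete e Q1 R2;
  complete_Q1_Q5 : complete e Q1 Q5;
  complete_Q4_Q3 : complete e Q4 Q3;
  complete_Q4_R3 : complete e Q4 R3;
  complete_Q4_Q5 : complete e Q4 Q5;
  complete_Q3_R3 : complete e Q3 R3;
  anticomplete_Q1_Q3 : anticomplete e Q1 Q3;
  anticomplete_Q1_R3 : anticomplete e Q1 R3;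
  anticomplete_Q1_Q4 : anticomplete e Q1 Q4;
  anticomplete_Q4_R2 : anticomplete e Q4 R2;
  anticomplete_Q5_Q2 : anticomplete e Q5 Q2;
  anticomplete_Q5_R2 : anticomplete e Q5 R2;
  anticomplete_Q5_Q3 : anticomplete e Q5 Q3;
  anticomplete_Q5_R3 : anticomplete e Q5 R3;
  dominated_R2 : dominated_into e R2 (Q3 :|: R3);
  no_universal_R2 : no_universal e R2;
  no_universal_R3 : no_universal e R3;
  clique_Q3 : is_clique e Q3 }.

Ltac subset_union := let x := fresh in move=> x; rewrite ?inE => ->; rewrite ?orbT //=.

Section BeltHalves.
Variables (T : finType) (e : rel T).

Lemma complete_sub (A B B' : {set T}) :
  complete e A B -> {subset B' <= B} -> complete e A B'.
Proof. by move=> AB B'B x y xA /B'B; apply: AB. Qed.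

Lemma anticomplete_sub (A B B' : {set T}) :
  anticomplete e A B -> {subset B' <= B} -> anticomplete e A B'.
Proof. by move=> AB B'B x y xA /B'B; apply: AB. Qed.

Lemma dominated_sub (A A' B : {set T}) :
  dominated_into e A B -> {subset A' <= A} -> dominated_into e A' B.
Proof. by move=> AB A'A x /A'A; apply: AB. Qed.

Lemma belt_halves Q1 Q2 Q3 Q4 Q5 R2 R3 :
  belt e Q1 Q2 Q3 Q4 Q5 R2 R3 ->
  half_belt e Q1 Q2 Q3 Q4 Q5 R2 R3 /\ half_belt e Q4 Q3 Q2 Q1 Q5 R3 R2.
Proof.
move=> [[e_sym e_irr] [P6_free [C4_free [C6_free [_ [[n1 [n2 [n3 [n4 n5]]]]
  [[k1 [k2 [k3 [k4 k5]]]] [c1 [c4 [a1 [a4 [a5 [c2 [c3 [d2 [d3 [u2 u3]]]]]]]]]]]]]]]]].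
by split; constructor => //; match goal with
  | |- complete _ _ _ => apply: complete_sub; [eassumption | subset_union]
  | |- anticomplete _ _ _ => apply: anticomplete_sub; [eassumption | subset_union]
  | |- dominated_into _ _ _ => apply: dominated_sub; [eassumption | subset_union]
  end.
Qed.

End BeltHalves.

Section HalfBelt.
Variables (T : finType) (e : rel T) (Q1 Q2 Q3 Q4 Q5 R2 R3 : {set T}).
Hypothesis hb : half_belt e Q1 Q2 Q3 Q4 Q5 R2 R3.
Let e_sym := belt_sym hb.
Let e_irr := belt_irr hb.

Lemma R2_no_common_nbr u v w :
  u \in R2 -> v \in R2 -> v != u -> ~~ e u v -> w \in Q3 :|: R3 -> e u w -> ~~ e v w.
Proof.
move=> uR2 vR2 vu nuv wQR euw; apply/negP => evw.
have /set0Pn [a aQ1] := Q1_nonempty hb.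
have /set0Pn [c cQ5] := Q5_nonempty hb.
have eau := complete_Q1_R2 hb aQ1 uR2; have eav := complete_Q1_R2 hb aQ1 vR2.
have eac := complete_Q1_Q5 hb aQ1 cQ5.
have [naw ncw] : ~~ e a w /\ ~~ e c w.
  by case/setUP: wQR => w_in; split;
    [ apply: (anticomplete_Q1_Q3 hb) | apply: (anticomplete_Q5_Q3 hb)
    | apply: (anticomplete_Q1_R3 hb) | apply: (anticomplete_Q5_R3 hb) ].
have aw : a != w by apply: (contraNneq _ ncw) => <-; rewrite e_sym.
have uv : u != v by rewrite eq_sym.
by apply: (no_induced_C4 e_sym e_irr (belt_C4_free hb) (x0 := u) (x1 := a) (x2 := v) (x3 := w));
  by_adjacency e_sym e_irr.
Qed.

Lemma R2_no_common_nbr_in_Q3 u v w :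
  u \in R2 -> v \in R2 -> u != v -> ~~ e u v -> w \in Q3 -> ~~ (e u w && e v w).
Proof.
move=> uR2 vR2 uv nuv wQ3; apply/nandP; case: (boolP (e u w)) => euw; [right | by left].
by apply: (R2_no_common_nbr uR2 vR2 _ nuv _ euw); rewrite 1?eq_sym // inE wQ3.
Qed.

End HalfBelt.

Section Belt.
Variables (T : finType) (e : rel T) (Q1 Q2 Q3 Q4 Q5 R2 R3 : {set T}).
Hypotheses (hb : half_belt e Q1 Q2 Q3 Q4 Q5 R2 R3)
           (hb' : half_belt e Q4 Q3 Q2 Q1 Q5 R3 R2).
Let e_sym := belt_sym hb.
Let e_irr := belt_irr hb.
Let P6_free := belt_P6_free hb.

Lemma anticomplete_R2_R3 : anticomplete e R2 R3.
Proof.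
move=> u v uR2 vR3; apply/negP => euv.
have [u' u'R2 /andP[u'u nuu']] := no_universal_R2 hb uR2.
have [v' v'R3 /andP[v'v nvv']] := no_universal_R3 hb vR3.
have nu'v : ~~ e u' v.
  by apply: (R2_no_common_nbr hb uR2 u'R2 u'u nuu' _ euv); rewrite inE vR3 orbT.
have nv'u : ~~ e v' u.
  by apply: (R2_no_common_nbr hb' vR3 v'R3 v'v nvv'); rewrite ?inE ?uR2 ?orbT // e_sym.
have /set0Pn [a aQ1] := Q1_nonempty hb.
have /set0Pn [d dQ4] := Q4_nonempty hb.
have eau := complete_Q1_R2 hb aQ1 uR2; have eau' := complete_Q1_R2 hb aQ1 u'R2.
have edv := complete_Q4_R3 hb dQ4 vR3; have edv' := complete_Q4_R3 hb dQ4 v'R3.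
have nav := anticomplete_Q1_R3 hb aQ1 vR3; have nav' := anticomplete_Q1_R3 hb aQ1 v'R3.
have nad := anticomplete_Q1_Q4 hb aQ1 dQ4.
have ndu := anticomplete_Q4_R2 hb dQ4 uR2; have ndu' := anticomplete_Q4_R2 hb dQ4 u'R2.
case: (boolP (e u' v')) => eu'v'.
- by apply: (no_induced_C6 e_sym e_irr (belt_C6_free hb) (x0 := a) (x1 := u) (x2 := v)
             (x3 := d) (x4 := v') (x5 := u')); by_adjacency e_sym e_irr.
- by apply: (no_induced_P6 e_sym e_irr P6_free (x0 := u') (x1 := a) (x2 := u) (x3 := v)
             (x4 := d) (x5 := v')); by_adjacency e_sym e_irr.
Qed.

Lemma R3_nbr_complete_Q3 x :
  x \in Q2 -> (exists2 y, y \in R3 & e x y) -> complete e [set x] Q3.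
Proof.
move=> xQ2 [y yR3 exy] _ z /set1P-> zQ3; apply/negPn/negP => nxz.
have [y' y'R3 /andP[y'y nyy']] := no_universal_R3 hb yR3.
have ny'x : ~~ e y' x.
  by apply: (R2_no_common_nbr hb' yR3 y'R3 y'y nyy'); rewrite ?inE ?xQ2 // e_sym.
have /set0Pn [a aQ1] := Q1_nonempty hb.
have /set0Pn [c cQ5] := Q5_nonempty hb.
have eac := complete_Q1_Q5 hb aQ1 cQ5; have eax := complete_Q1_Q2 hb aQ1 xQ2.
have ezy := complete_Q3_R3 hb zQ3 yR3; have ezy' := complete_Q3_R3 hb zQ3 y'R3.
have ncx := anticomplete_Q5_Q2 hb cQ5 xQ2; have ncz := anticomplete_Q5_Q3 hb cQ5 zQ3.
have ncy := anticomplete_Q5_R3 hb cQ5 yR3; have ncy' := anticomplete_Q5_R3 hb cQ5 y'R3.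
have nay := anticomplete_Q1_R3 hb aQ1 yR3; have nay' := anticomplete_Q1_R3 hb aQ1 y'R3.
have naz := anticomplete_Q1_Q3 hb aQ1 zQ3.
by apply: (no_induced_P6 e_sym e_irr P6_free (x0 := c) (x1 := a) (x2 := x) (x3 := y)
           (x4 := z) (x5 := y')); by_adjacency e_sym e_irr.
Qed.

Lemma R2_nbr_in_Q3 u : u \in R2 -> exists2 w, w \in Q3 & e u w.
Proof.
move=> uR2; have [w /setUP[wQ3 | wR3] euw] := dominated_R2 hb uR2; first by exists w.
by move: (anticomplete_R2_R3 uR2 wR3); rewrite euw.
Qed.

Lemma R2_no_induced_P4 p0 p1 p2 p3 :
  p0 \in R2 -> p1 \in R2 -> p2 \in R2 -> p3 \in R2 ->
  e p0 p1 -> e p1 p2 -> e p2 p3 -> ~~ e p0 p2 -> ~~ e p0 p3 -> ~~ e p1 p3 ->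
  p2 != p0 -> p3 != p0 -> False.
Proof.
move=> r0 r1 r2 r3 e01 e12 e23 n02 n03 n13 d20 d30.
have [w wQ3 e0w] := R2_nbr_in_Q3 r0.
have wQR : w \in Q3 :|: R3 by rewrite inE wQ3.
have n2w := R2_no_common_nbr hb r0 r2 d20 n02 wQR e0w.
have n3w := R2_no_common_nbr hb r0 r3 d30 n03 wQR e0w.
have /set0Pn [d dQ4] := Q4_nonempty hb.
have /set0Pn [c cQ5] := Q5_nonempty hb.
have edc := complete_Q4_Q5 hb dQ4 cQ5; have edw := complete_Q4_Q3 hb dQ4 wQ3.
have ncw := anticomplete_Q5_Q3 hb cQ5 wQ3.
have nc1 := anticomplete_Q5_R2 hb cQ5 r1; have nc2 := anticomplete_Q5_R2 hb cQ5 r2.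
have nc3 := anticomplete_Q5_R2 hb cQ5 r3.
have nd0 := anticomplete_Q4_R2 hb dQ4 r0; have nd1 := anticomplete_Q4_R2 hb dQ4 r1.
have nd2 := anticomplete_Q4_R2 hb dQ4 r2; have nd3 := anticomplete_Q4_R2 hb dQ4 r3.
case: (boolP (e p1 w)) => e1w.
- by apply: (no_induced_P6 e_sym e_irr P6_free (x0 := c) (x1 := d) (x2 := w) (x3 := p1)
             (x4 := p2) (x5 := p3)); by_adjacency e_sym e_irr.
- by apply: (no_induced_P6 e_sym e_irr P6_free (x0 := d) (x1 := w) (x2 := p0) (x3 := p1)
             (x4 := p2) (x5 := p3)); by_adjacency e_sym e_irr.
Qed.

(* With w, w' in Q3 adjacent to the centres p1, p4, an end x of the first P3
   missing w and an end y of the second missing w' give the P6 x-p1-w-w'-p4-y. *)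
Lemma R2_no_induced_2P3 p0 p1 p2 p3 p4 p5 :
  p0 \in R2 -> p1 \in R2 -> p2 \in R2 -> p3 \in R2 -> p4 \in R2 -> p5 \in R2 ->
  e p0 p1 -> e p1 p2 -> e p3 p4 -> e p4 p5 ->
  ~~ e p0 p2 -> ~~ e p0 p3 -> ~~ e p0 p4 -> ~~ e p0 p5 -> ~~ e p1 p3 -> ~~ e p1 p4 ->
  ~~ e p1 p5 -> ~~ e p2 p3 -> ~~ e p2 p4 -> ~~ e p2 p5 -> ~~ e p3 p5 ->
  p2 != p0 -> p3 != p1 -> p4 != p1 -> p5 != p1 ->
  p0 != p4 -> p1 != p4 -> p2 != p4 -> p5 != p3 -> False.
Proof.
move=> r0 r1 r2 r3 r4 r5 e01 e12 e34 e45 n02 n03 n04 n05 n13 n14 n15 n23 n24 n25 n35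
  d20 d31 d41 d51 d04 d14 d24 d53.
have [w wQ3 e1w] := R2_nbr_in_Q3 r1.
have wQR : w \in Q3 :|: R3 by rewrite inE wQ3.
have n3w := R2_no_common_nbr hb r1 r3 d31 n13 wQR e1w.
have n4w := R2_no_common_nbr hb r1 r4 d41 n14 wQR e1w.
have n5w := R2_no_common_nbr hb r1 r5 d51 n15 wQR e1w.
have [w' w'Q3 e4w'] := R2_nbr_in_Q3 r4.
have w'QR : w' \in Q3 :|: R3 by rewrite inE w'Q3.
have n0w' : ~~ e p0 w' by apply: (R2_no_common_nbr hb r4 r0 d04 _ w'QR e4w'); rewrite e_sym.
have n1w' : ~~ e p1 w' by apply: (R2_no_common_nbr hb r4 r1 d14 _ w'QR e4w'); rewrite e_sym.
have n2w' : ~~ e p2 w' by apply: (R2_no_common_nbr hb r4 r2 d24 _ w'QR e4w'); rewrite e_sym.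
have eww' : e w w'.
  apply: (clique_Q3 hb wQ3 w'Q3); apply: contraNneq n1w' => <-; exact: e1w.
have [x [ex1 nxw x_end]] : exists x, [/\ e x p1, ~~ e x w & x = p0 \/ x = p2].
  case: (boolP (e p0 w)) => e0w; last by exists p0; split; [| | left].
  exists p2; split; last by right.
    by rewrite e_sym.
  exact: (R2_no_common_nbr hb r0 r2 d20 n02 wQR e0w).
have [y [ey4 nyw' y_end]] : exists y, [/\ e y p4, ~~ e y w' & y = p3 \/ y = p5].
  case: (boolP (e p3 w')) => e3w'; last by exists p3; split; [| | left].
  exists p5; split; last by right.
    by rewrite e_sym.
  exact: (R2_no_common_nbr hb r3 r5 d53 n35 w'QR e3w').
apply: (no_induced_P6 e_sym e_irr P6_free (x0 := x) (x1 := p1) (x2 := w) (x3 := w')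
         (x4 := p4) (x5 := y));
  by case: x_end => ?; case: y_end => ?; subst x y; by_adjacency e_sym e_irr.
Qed.

Lemma R2_P4_free : ~ contains_induced_in e R2 (path_pat 4).
Proof.
case=> f [f_inj [fR2 fe]].
by apply: (@R2_no_induced_P4 (f (@Ordinal 4 0 isT)) (f (@Ordinal 4 1 isT))
           (f (@Ordinal 4 2 isT)) (f (@Ordinal 4 3 isT)));
  rewrite ?fe ?(inj_eq f_inj) ?fR2.
Qed.

Lemma R2_2P3_free : ~ contains_induced_in e R2 twoP3_pat.
Proof.
case=> f [f_inj [fR2 fe]].
by apply: (@R2_no_induced_2P3 (f (@Ordinal 6 0 isT)) (f (@Ordinal 6 1 isT))
           (f (@Ordinal 6 2 isT)) (f (@Ordinal 6 3 isT)) (f (@Ordinal 6 4 isT))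
           (f (@Ordinal 6 5 isT)));
  rewrite ?fe ?(inj_eq f_inj) ?fR2.
Qed.

End Belt.

Theorem theorem4p1 (T : finType) (e : rel T) (Q1 Q2 Q3 Q4 Q5 R2 R3 : {set T}) :
  belt e Q1 Q2 Q3 Q4 Q5 R2 R3 ->
  [/\ (* (a) *)
      (forall u v w, u \in R2 -> v \in R2 -> u != v -> ~~ e u v ->
         w \in Q3 -> ~~ (e u w && e v w)) /\
      (forall u v w, u \in R3 -> v \in R3 -> u != v -> ~~ e u v ->
         w \in Q2 -> ~~ (e u w && e v w)),
      (* (b) *)
      anticomplete e R2 R3,
      (* (c) *)
      (forall x, x \in Q2 -> (exists2 y, y \in R3 & e x y) -> complete e [set x] Q3) /\
      (forall x, x \in Q3 -> (exists2 y, y \in R2 & e x y) -> complete e [set x] Q2) &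
      (* (d) *)
      [/\ ~ contains_induced_in e R2 (path_pat 4), ~ contains_induced_in e R2 twoP3_pat,
          ~ contains_induced_in e R3 (path_pat 4) & ~ contains_induced_in e R3 twoP3_pat]].
Proof.
move=> /belt_halves[hb hb'].
split.
- by split; [apply: R2_no_common_nbr_in_Q3 hb | apply: R2_no_common_nbr_in_Q3 hb'].
- exact: anticomplete_R2_R3 hb hb'.
- by split; [apply: R3_nbr_complete_Q3 hb hb' | apply: R3_nbr_complete_Q3 hb' hb].
- by split; [apply: R2_P4_free hb hb' | apply: R2_2P3_free hb hb'
            | apply: R2_P4_free hb' hb | apply: R2_2P3_free hb' hb].
Qed.
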